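(* Let $X$ be a perfectly normal space and let $E\subseteq X$ be a subspace which is equiconnected. Suppose $E=\bigcup_{n=1}^\infty E_n$ where: (1) $E_n\cap E_m=\emptyset$ for $n\ne m$; (2) each $E_n$ is an ambiguous set in $E$; (3) each $E_n$ is a $B_1$-retract of $X$; (4) $E$ is a $G_\delta$-set in $X$. Then $E$ is a $B_1$-retract of $X$.
   Context: A function $f:X\to Y$ between topological spaces is a Baire-one function if it is the pointwise limit of a sequence of continuous functions $f_n:X\to Y$. A subset $E$ of $X$ (with the subspace topology) is a $B_1$-retract of $X$ if there exists a Baire-one function $r:X\to E$ with $r(x)=x$ for all $x\in E$. A subset of a topological space is ambiguous if it is simultaneously an $F_\sigma$-set and a $G_\delta$-set. A space is perfectly normal if it is normal and every closed subset is a $G_\delta$-set. A topological space $Y$ is equiconnected if there is a continuous $\gamma:Y\times Y\times[0,1]\to Y$ with $\gamma(y',y'',0)=y'$, $\gamma(y',y'',1)=y''$ and $\gamma(y',y',t)=y'$ for all $y',y''\in Y$, $t\in[0,1]$. *)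

From Stdlib Require Import Reals Lra Classical.
Open Scope R_scope.
Set Implicit Arguments.

Record topology (X : Type) := Topology {
  is_open : (X -> Prop) -> Prop;
  open_full : is_open (fun _ => True);
  open_inter : forall U V, is_open U -> is_open V -> is_open (fun x => U x /\ V x);
  open_union : forall (F : (X -> Prop) -> Prop),
      (forall U, F U -> is_open U) -> is_open (fun x => exists U, F U /\ U x)
}.

Definition subspace_open {X : Type} (T : topology X) (A : X -> Prop)
  (V : {x | A x} -> Prop) : Prop :=
  exists U, is_open T U /\ forall a, V a <-> U (proj1_sig a).

Definition subspace {X : Type} (T : topology X) (A : X -> Prop) : topology {x | A x}.
Proof.
  refine (@Topology _ (subspace_open T A) _ _ _).
  - exists (fun _ => True); split; [apply open_full | tauto].
  - intros U V [U' [HU' EU]] [V' [HV' EV]].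
    exists (fun x => U' x /\ V' x); split; [apply open_inter; auto |].
    intro a; rewrite EU, EV; tauto.
  - intros F HF.
    exists (fun x => exists U, (is_open T U /\ exists V, F V /\ forall a, V a <-> U (proj1_sig a)) /\ U x).
    split.
    + apply open_union; intros U [HU _]; exact HU.
    + intro a; split.
      * intros [V [HV Va]]. destruct (HF V HV) as [U [HU EU]].
        exists U; split; [split; [exact HU | exists V; auto] | apply EU; exact Va].
      * intros [U [[HU [V [HV EV]]] Ua]]. exists V; split; [exact HV | apply EV; exact Ua].
Defined.

Definition prod_open {A B : Type} (TA : topology A) (TB : topology B)
  (W : A * B -> Prop) : Prop :=
  forall p, W p -> exists U V, is_open TA U /\ is_open TB V /\ U (fst p) /\ V (snd p) /\
    forall q, U (fst q) -> V (snd q) -> W q.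

Definition prod_top {A B : Type} (TA : topology A) (TB : topology B) : topology (A * B).
Proof.
  refine (@Topology _ (prod_open TA TB) _ _ _).
  - intros p _. exists (fun _ => True), (fun _ => True).
    repeat split; try apply open_full; auto.
  - intros W1 W2 H1 H2 p [p1 p2].
    destruct (H1 p p1) as [U1 [V1 [? [? [? [? K1]]]]]].
    destruct (H2 p p2) as [U2 [V2 [? [? [? [? K2]]]]]].
    exists (fun x => U1 x /\ U2 x), (fun y => V1 y /\ V2 y).
    split; [apply open_inter; auto|]. split; [apply open_inter; auto|].
    split; [split; auto|]. split; [split; auto|].
    intros q0 [] []; split; auto.
  - intros F HF p [W [FW Wp]].
    destruct (HF W FW p Wp) as [U [V [? [? [? [? K]]]]]].
    exists U, V; repeat split; auto. intros q Uq Vq; exists W; auto.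
Defined.

Definition R_open (U : R -> Prop) : Prop :=
  forall x, U x -> exists eps, 0 < eps /\ forall y, Rabs (y - x) < eps -> U y.

Definition R_top : topology R.
Proof.
  refine (@Topology _ R_open _ _ _).
  - intros x _; exists 1; split; [lra | auto].
  - intros U V HU HV x [Ux Vx].
    destruct (HU x Ux) as [e1 [He1 K1]]. destruct (HV x Vx) as [e2 [He2 K2]].
    exists (Rmin e1 e2); split; [apply Rmin_glb_lt; auto |].
    intros y Hy; split; [apply K1 | apply K2];
      eapply Rlt_le_trans; eauto; [apply Rmin_l | apply Rmin_r].
  - intros F HF x [U [FU Ux]].
    destruct (HF U FU x Ux) as [e [He K]]. exists e; split; auto.
    intros y Hy; exists U; auto.
Defined.

Definition unit_interval : Type := {t : R | 0 <= t <= 1}.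
Definition I_top : topology unit_interval := subspace R_top (fun t => 0 <= t <= 1).

Definition continuous {X Y : Type} (TX : topology X) (TY : topology Y) (f : X -> Y) : Prop :=
  forall V, is_open TY V -> is_open TX (fun x => V (f x)).

Definition seq_converges {Y : Type} (TY : topology Y) (u : nat -> Y) (y : Y) : Prop :=
  forall V, is_open TY V -> V y -> exists N, forall n, (N <= n)%nat -> V (u n).

Definition baire_one {X Y : Type} (TX : topology X) (TY : topology Y) (f : X -> Y) : Prop :=
  exists fn : nat -> X -> Y,
    (forall n, continuous TX TY (fn n)) /\
    forall x, seq_converges TY (fun n => fn n x) (f x).

Definition B1_retract {X : Type} (TX : topology X) (E : X -> Prop) : Prop :=
  exists r : X -> {x | E x},
    baire_one TX (subspace TX E) r /\ forall e : {x | E x}, r (proj1_sig e) = e.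

Definition closed {X : Type} (T : topology X) (A : X -> Prop) : Prop :=
  is_open T (fun x => ~ A x).

Definition F_sigma {X : Type} (T : topology X) (A : X -> Prop) : Prop :=
  exists F : nat -> X -> Prop,
    (forall k, closed T (F k)) /\ forall x, A x <-> exists k, F k x.

Definition G_delta {X : Type} (T : topology X) (A : X -> Prop) : Prop :=
  exists G : nat -> X -> Prop,
    (forall k, is_open T (G k)) /\ forall x, A x <-> forall k, G k x.

Definition ambiguous {X : Type} (T : topology X) (A : X -> Prop) : Prop :=
  F_sigma T A /\ G_delta T A.

(** Normal and perfectly normal spaces (no separation axiom T1 built in). *)
Definition normal {X : Type} (T : topology X) : Prop :=
  forall A B, closed T A -> closed T B -> (forall x, ~ (A x /\ B x)) ->
    exists U V, is_open T U /\ is_open T V /\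
      (forall x, A x -> U x) /\ (forall x, B x -> V x) /\
      (forall x, ~ (U x /\ V x)).

Definition perfectly_normal {X : Type} (T : topology X) : Prop :=
  normal T /\ forall A, closed T A -> G_delta T A.

Definition equiconnected {Y : Type} (TY : topology Y) : Prop :=
  exists g : Y * Y * unit_interval -> Y,
    continuous (prod_top (prod_top TY TY) I_top) TY g /\
    forall (y1 y2 : Y) (t : unit_interval),
      (proj1_sig t = 0 -> g (y1, y2, t) = y1) /\
      (proj1_sig t = 1 -> g (y1, y2, t) = y2) /\
      g (y1, y1, t) = y1.

From Stdlib Require Import Reals Classical Lra Lia Wf_nat.
From Stdlib Require Import ProofIrrelevance FunctionalExtensionality PropExtensionality ClassicalEpsilon.
From Stdlib Require Cantor.

(* Cover X by countably many closed sets Q_i: the complements of the open sets whose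
   intersection is E, together with closed sets whose traces on E exhaust each E_n (E_n is
   F_sigma in E); each Q_i carries the retraction onto the E_n it lies in.  Send x to its
   image under the retraction of the first piece containing x.  Since X is perfectly
   normal, the union of the first i pieces is a G_delta, so the points whose first piece is
   Q_i form an increasing union of closed sets M_i^k, disjoint in i.  Urysohn's lemma and
   the equiconnecting map of E paste the k-th continuous approximations of the finitely
   many relevant retractions into one continuous map on X, and at every point these maps
   eventually coincide with the approximations of the retraction chosen there. *)

Section OpenClosed.
Context {X : Type} (T : topology X).

Lemma open_ext (U V : X -> Prop) : (forall x, U x <-> V x) -> is_open T U -> is_open T V.
Proof.
  intros HUV HU. replace V with U; auto.
  apply functional_extensionality; intro x; apply propositional_extensionality; auto.
Qed.

Lemma open_of_local (W : X -> Prop) :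
  (forall x, W x -> exists N, is_open T N /\ N x /\ forall y, N y -> W y) -> is_open T W.
Proof.
  intro HW.
  apply open_ext with (fun x => exists N, (is_open T N /\ forall y, N y -> W y) /\ N x).
  - intro x; split.
    + intros [N [[_ HN] Nx]]; auto.
    + intro Wx; destruct (HW x Wx) as [N [HN [Nx HNW]]]; exists N; auto.
  - apply (open_union T (fun N => is_open T N /\ forall y, N y -> W y)); tauto.
Qed.

Lemma open_or (U V : X -> Prop) :
  is_open T U -> is_open T V -> is_open T (fun x => U x \/ V x).
Proof.
  intros HU HV. apply open_ext with (fun x => exists W, (W = U \/ W = V) /\ W x).
  - intro x; split.
    + intros [W [[-> | ->] Wx]]; auto.
    + intros [Ux | Vx]; [exists U | exists V]; auto.
  - apply open_union; intros W [-> | ->]; auto.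
Qed.

Lemma closed_compl (U : X -> Prop) : is_open T U -> closed T (fun x => ~ U x).
Proof.
  intro HU; apply open_ext with U; [|exact HU].
  intro x; split; [tauto | apply NNPP].
Qed.

Lemma closed_full : closed T (fun _ => True).
Proof.
  apply open_ext with (fun x => exists U, False /\ U x).
  - intro x; split; [intros [U [[] _]] | intro H; contradiction (H I)].
  - apply (open_union T (fun _ => False)); tauto.
Qed.

Lemma closed_or (A B : X -> Prop) :
  closed T A -> closed T B -> closed T (fun x => A x \/ B x).
Proof.
  intros HA HB. apply open_ext with (fun x => ~ A x /\ ~ B x); [tauto|].
  apply open_inter; auto.
Qed.

Lemma closed_and (A B : X -> Prop) :
  closed T A -> closed T B -> closed T (fun x => A x /\ B x).
Proof.
  intros HA HB. apply open_ext with (fun x => ~ A x \/ ~ B x).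
  { intro x; split; [tauto | apply not_and_or]. }
  apply open_or; auto.
Qed.

Lemma closed_bounded_exists (P : nat -> X -> Prop) :
  (forall j, closed T (P j)) -> forall k, closed T (fun x => exists j, (j < k)%nat /\ P j x).
Proof.
  intros HP k; induction k as [|k IHk].
  - apply open_ext with (fun _ => True); [|apply open_full].
    intro x; split; [intros _ [j [Hj _]]; lia | tauto].
  - apply open_ext with (fun x => ~ ((exists j, (j < k)%nat /\ P j x) \/ P k x)).
    + intro x; split; intros Hn Hx; apply Hn.
      * destruct Hx as [j [Hj Pj]].
        destruct (Nat.eq_dec j k) as [-> | Hne]; [right | left; exists j; split]; auto; lia.
      * destruct Hx as [[j [Hj Pj]] | Pk]; [exists j | exists k]; split; auto; lia.
    + apply closed_or; auto.
Qed.

End OpenClosed.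

Lemma continuous_comp {X Y Z} (TX : topology X) (TY : topology Y) (TZ : topology Z)
  (f : X -> Y) (g : Y -> Z) :
  continuous TX TY f -> continuous TY TZ g -> continuous TX TZ (fun x => g (f x)).
Proof. intros Hf Hg V HV; exact (Hf _ (Hg V HV)). Qed.

Lemma continuous_pair {X A B} (TX : topology X) (TA : topology A) (TB : topology B)
  (f : X -> A) (g : X -> B) :
  continuous TX TA f -> continuous TX TB g ->
  continuous TX (prod_top TA TB) (fun x => (f x, g x)).
Proof.
  intros Hf Hg W HW. apply open_of_local. intros x Wx.
  destruct (HW _ Wx) as [U [V [HU [HV [Ux [Vx HUV]]]]]].
  exists (fun y => U (f y) /\ V (g y)); repeat split; auto.
  - apply open_inter; [apply Hf | apply Hg]; auto.
  - intros y [Uy Vy]; apply HUV; auto.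
Qed.

Lemma continuous_seq_converges {X Y} (TX : topology X) (TY : topology Y) (f : X -> Y)
  (u : nat -> X) (x : X) :
  continuous TX TY f -> seq_converges TX u x -> seq_converges TY (fun n => f (u n)) (f x).
Proof. intros Hf Hu V HV Vfx; exact (Hu _ (Hf V HV) Vfx). Qed.

Lemma seq_converges_eventually_eq {Y} (TY : topology Y) (u v : nat -> Y) (y : Y) :
  (exists N, forall n, (N <= n)%nat -> u n = v n) ->
  seq_converges TY v y -> seq_converges TY u y.
Proof.
  intros [N HN] Hv V HV Vy. destruct (Hv V HV Vy) as [M HM].
  exists (Nat.max N M); intros n Hn. rewrite HN by lia. apply HM; lia.
Qed.

Lemma baire_one_comp_continuous {X Y Z} (TX : topology X) (TY : topology Y) (TZ : topology Z)
  (f : X -> Y) (g : Y -> Z) :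
  baire_one TX TY f -> continuous TY TZ g -> baire_one TX TZ (fun x => g (f x)).
Proof.
  intros [fn [Hfn Hlim]] Hg. exists (fun n x => g (fn n x)); split.
  - intro n; apply (continuous_comp TX TY TZ); auto.
  - intro x; apply (continuous_seq_converges TY TZ g (fun n => fn n x)); auto.
Qed.

Definition subspace_incl {X} (A B : X -> Prop) (HAB : forall x, A x -> B x)
  (a : {x | A x}) : {x | B x} :=
  exist B (proj1_sig a) (HAB _ (proj2_sig a)).

Lemma subspace_incl_continuous {X} (T : topology X) (A B : X -> Prop)
  (HAB : forall x, A x -> B x) :
  continuous (subspace T A) (subspace T B) (subspace_incl A B HAB).
Proof.
  intros V [U [HU HUV]]. exists U; split; [exact HU|].
  intro a; exact (HUV (subspace_incl A B HAB a)).
Qed.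

Lemma exists_least_nat (P : nat -> Prop) :
  (exists k, P k) -> exists k, P k /\ forall j, (j < k)%nat -> ~ P j.
Proof.
  intro Hex.
  destruct (dec_inh_nat_subset_has_unique_least_element P (fun n => classic (P n)) Hex)
    as [k [[Pk Hk] _]].
  exists k; split; auto. intros j Hj Pj; specialize (Hk j Pj); lia.
Qed.

Lemma INR_pow2 (n : nat) : INR (2 ^ n) = 2 ^ n.
Proof. rewrite pow_INR; reflexivity. Qed.

Lemma pow2_pos (n : nat) : 0 < 2 ^ n.
Proof. apply pow_lt; lra. Qed.

Definition dyadic (n k : nat) : R := INR k / 2 ^ n.

Lemma dyadic_nonneg (n k : nat) : 0 <= dyadic n k.
Proof.
  unfold dyadic, Rdiv; apply Rmult_le_pos; [apply pos_INR | left; apply Rinv_0_lt_compat, pow2_pos].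
Qed.

Lemma dyadic_small (eps : R) : 0 < eps -> exists n, 2 / 2 ^ n < eps.
Proof.
  intro Heps. destruct (Pow_x_infinity 2 ltac:(rewrite Rabs_pos_eq; lra) (3 / eps)) as [n Hn].
  exists n. specialize (Hn n (le_n n)). rewrite Rabs_pos_eq in Hn by (left; apply pow2_pos).
  assert (P := pow2_pos n).
  apply (Rmult_lt_reg_r (2 ^ n)); auto. unfold Rdiv.
  rewrite Rmult_assoc, Rinv_l by lra.
  apply Rge_le in Hn. apply (Rmult_le_compat_l eps) in Hn; [|lra].
  replace (eps * (3 / eps)) with 3 in Hn by (field; lra). lra.
Qed.

Lemma le_of_le_plus_inv_pow2 (a b : R) : (forall n, a <= b + / 2 ^ n) -> a <= b.
Proof.
  intro H. apply Rnot_lt_le; intro Hlt.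
  destruct (dyadic_small (a - b)) as [n Hn]; [lra|].
  assert (0 < / 2 ^ n) by (apply Rinv_0_lt_compat, pow2_pos).
  specialize (H n). unfold Rdiv in Hn. lra.
Qed.

Section Urysohn.
Context {X : Type} (T : topology X) (HT : normal T).

Definition between (P Q : X -> Prop) (p : (X -> Prop) * (X -> Prop)) : Prop :=
  is_open T (fst p) /\ closed T (snd p) /\
  (forall x, P x -> fst p x) /\ (forall x, fst p x -> snd p x) /\ (forall x, snd p x -> Q x).

Lemma normal_between (P Q : X -> Prop) :
  closed T P -> is_open T Q -> (forall x, P x -> Q x) -> exists p, between P Q p.
Proof.
  intros HP HQ HPQ.
  destruct (HT P (fun x => ~ Q x) HP (closed_compl T Q HQ)) as [U [V [HU [HV [PU [QV UV]]]]]].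
  { intros x [Px nQx]; auto. }
  exists (U, fun x => ~ V x); repeat split; simpl; auto.
  - apply closed_compl; auto.
  - intros x Ux Vx; apply (UV x); auto.
  - intros x nVx; apply NNPP; auto.
Qed.

(* The junk value [(Q, Q)] is never used: [shrink] is only applied to admissible pairs. *)
Definition shrink (P Q : X -> Prop) : (X -> Prop) * (X -> Prop) :=
  epsilon (inhabits (Q, Q))
    (fun p => closed T P -> is_open T Q -> (forall x, P x -> Q x) -> between P Q p).

Lemma shrink_between (P Q : X -> Prop) :
  closed T P -> is_open T Q -> (forall x, P x -> Q x) -> between P Q (shrink P Q).
Proof.
  intros HP HQ HPQ.
  destruct (normal_between P Q HP HQ HPQ) as [p Hp].
  apply (epsilon_spec (inhabits (Q, Q))
    (fun p => closed T P -> is_open T Q -> (forall x, P x -> Q x) -> between P Q p)); auto.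
  exists p; auto.
Qed.

Variables A B : X -> Prop.

(* [scale n k] is the pair (open set, closed set) attached to the dyadic rational k / 2^n;
   a new odd numerator is squeezed between its two neighbours of the previous level. *)
Fixpoint scale (n : nat) : nat -> (X -> Prop) * (X -> Prop) :=
  match n with
  | O => fun k => match k with
                 | O => shrink A (fun x => ~ B x)
                 | 1 => (fun x => ~ B x, fun _ => True)
                 | _ => (fun _ => True, fun _ => True)
                 end
  | S m => fun k => if Nat.even k then scale m (Nat.div2 k)
                   else shrink (snd (scale m (Nat.div2 k))) (fst (scale m (S (Nat.div2 k))))
  end.

Definition open_part (n k : nat) : X -> Prop := fst (scale n k).
Definition closed_part (n k : nat) : X -> Prop := snd (scale n k).

Lemma scale_double (m j : nat) : scale (S m) (2 * j) = scale m j.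
Proof.
  change (scale (S m) (2 * j)) with
    (if Nat.even (2 * j) then scale m (Nat.div2 (2 * j))
     else shrink (snd (scale m (Nat.div2 (2 * j)))) (fst (scale m (S (Nat.div2 (2 * j)))))).
  rewrite Nat.even_even, Nat.div2_double; reflexivity.
Qed.

Lemma scale_double_succ (m j : nat) :
  scale (S m) (2 * j + 1) = shrink (closed_part m j) (open_part m (S j)).
Proof.
  change (scale (S m) (2 * j + 1)) with
    (if Nat.even (2 * j + 1) then scale m (Nat.div2 (2 * j + 1))
     else shrink (snd (scale m (Nat.div2 (2 * j + 1)))) (fst (scale m (S (Nat.div2 (2 * j + 1)))))).
  rewrite Nat.even_odd, Nat.div2_odd'; reflexivity.
Qed.

Lemma open_part_double (m j : nat) : open_part (S m) (2 * j) = open_part m j.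
Proof. unfold open_part; rewrite scale_double; reflexivity. Qed.

Lemma closed_part_double (m j : nat) : closed_part (S m) (2 * j) = closed_part m j.
Proof. unfold closed_part; rewrite scale_double; reflexivity. Qed.

Lemma open_part_double_succ (m j : nat) :
  open_part (S m) (2 * j + 1) = fst (shrink (closed_part m j) (open_part m (S j))).
Proof. unfold open_part; rewrite scale_double_succ; reflexivity. Qed.

Lemma closed_part_double_succ (m j : nat) :
  closed_part (S m) (2 * j + 1) = snd (shrink (closed_part m j) (open_part m (S j))).
Proof. unfold closed_part; rewrite scale_double_succ; reflexivity. Qed.

Record scale_spec (n : nat) : Prop := {
  open_part_open : forall k, is_open T (open_part n k);
  closed_part_closed : forall k, closed T (closed_part n k);
  open_part_sub : forall k x, open_part n k x -> closed_part n k x;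
  closed_part_sub : forall k x, closed_part n k x -> open_part n (S k) x;
  A_sub_open_part : forall x, A x -> open_part n 0 x;
  open_part_disjoint_B : forall k x, (k <= 2 ^ n)%nat -> open_part n k x -> ~ B x;
  closed_part_top : forall k x, (2 ^ n <= k)%nat -> closed_part n k x }.

Hypotheses (HA : closed T A) (HB : closed T B) (HAB : forall x, ~ (A x /\ B x)).

Lemma scale_spec_0 : scale_spec 0.
Proof.
  destruct (shrink_between A (fun x => ~ B x) HA HB (fun x Ax Bx => HAB x (conj Ax Bx)))
    as [I1 [I2 [I3 [I4 I5]]]].
  split; unfold open_part, closed_part.
  - intros [|[|k]]; [exact I1 | exact HB | apply open_full].
  - intros [|[|k]]; [exact I2 | apply closed_full | apply closed_full].
  - intros [|[|k]] x; simpl; auto.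
  - intros [|[|k]] x; simpl; auto.
  - exact I3.
  - intros [|[|k]] x Hk; simpl in *; [auto | auto | lia].
  - intros [|[|k]] x Hk; simpl in *; auto; lia.
Qed.

Lemma scale_spec_S (n : nat) : scale_spec n -> scale_spec (S n).
Proof.
  intros Hn.
  assert (Hmid : forall j, between (closed_part n j) (open_part n (S j))
                             (shrink (closed_part n j) (open_part n (S j)))).
  { intro j; apply shrink_between;
      [apply (closed_part_closed n Hn) | apply (open_part_open n Hn) | apply (closed_part_sub n Hn)]. }
  assert (P2 : (2 ^ S n = 2 * 2 ^ n)%nat) by (simpl; lia).
  split.
  - intro k; destruct (Nat.Even_or_Odd k) as [[j ->] | [j ->]].
    + rewrite open_part_double; apply (open_part_open n Hn).
    + rewrite open_part_double_succ; apply (Hmid j).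
  - intro k; destruct (Nat.Even_or_Odd k) as [[j ->] | [j ->]].
    + rewrite closed_part_double; apply (closed_part_closed n Hn).
    + rewrite closed_part_double_succ; apply (Hmid j).
  - intros k x; destruct (Nat.Even_or_Odd k) as [[j ->] | [j ->]].
    + rewrite open_part_double, closed_part_double; apply (open_part_sub n Hn).
    + rewrite open_part_double_succ, closed_part_double_succ; apply (Hmid j).
  - intros k x; destruct (Nat.Even_or_Odd k) as [[j ->] | [j ->]].
    + rewrite closed_part_double; replace (S (2 * j)) with (2 * j + 1)%nat by lia.
      rewrite open_part_double_succ; apply (Hmid j).
    + rewrite closed_part_double_succ; replace (S (2 * j + 1)) with (2 * S j)%nat by lia.
      rewrite open_part_double; apply (Hmid j).
  - intros x Ax; rewrite <- (Nat.mul_0_r 2), open_part_double; apply (A_sub_open_part n Hn), Ax.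
  - intros k x Hk; rewrite P2 in Hk; destruct (Nat.Even_or_Odd k) as [[j ->] | [j ->]].
    + rewrite open_part_double; apply (open_part_disjoint_B n Hn); lia.
    + rewrite open_part_double_succ; intro Hx.
      apply (open_part_disjoint_B n Hn (S j)); [lia | apply (Hmid j), (Hmid j), Hx].
  - intros k x Hk; rewrite P2 in Hk; destruct (Nat.Even_or_Odd k) as [[j ->] | [j ->]].
    + rewrite closed_part_double; apply (closed_part_top n Hn); lia.
    + rewrite closed_part_double_succ; apply (Hmid j), (Hmid j), (closed_part_top n Hn); lia.
Qed.

Lemma scale_spec_all (n : nat) : scale_spec n.
Proof. induction n; [exact scale_spec_0 | apply scale_spec_S; exact IHn]. Qed.


Lemma scale_refine (d n k : nat) : scale (n + d) (k * 2 ^ d) = scale n k.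
Proof.
  revert n k; induction d as [|d IHd]; intros n k.
  - rewrite Nat.add_0_r, Nat.pow_0_r, Nat.mul_1_r; reflexivity.
  - replace (n + S d)%nat with (S (n + d)) by lia.
    replace (k * 2 ^ S d)%nat with (2 * (k * 2 ^ d))%nat by (simpl; lia).
    rewrite scale_double; apply IHd.
Qed.

Lemma open_part_sub_closed_part (n a b : nat) (x : X) :
  (a <= b)%nat -> open_part n a x -> closed_part n b x.
Proof.
  intros Hab Ha. induction b as [|b IHb].
  - replace a with 0%nat in Ha by lia. apply (open_part_sub n (scale_spec_all n)), Ha.
  - destruct (Nat.eq_dec a (S b)) as [-> | Hne].
    + apply (open_part_sub n (scale_spec_all n)), Ha.
    + apply (open_part_sub n (scale_spec_all n)), (closed_part_sub n (scale_spec_all n)), IHb; lia.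
Qed.

Lemma open_part_sub_closed_part_dyadic (m j n k : nat) (x : X) :
  (j * 2 ^ n <= k * 2 ^ m)%nat -> open_part m j x -> closed_part n k x.
Proof.
  intros Hle Hj.
  unfold open_part in Hj; rewrite <- (scale_refine n m j) in Hj.
  unfold closed_part; rewrite <- (scale_refine m n k), Nat.add_comm.
  apply (open_part_sub_closed_part (m + n) (j * 2 ^ n)); auto.
Qed.

Lemma dyadic_le_of_open_part (m j n k : nat) (x : X) :
  open_part m j x -> ~ closed_part n k x -> dyadic n k <= dyadic m j.
Proof.
  intros Hj Hk. apply Rnot_lt_le; intro Hlt. apply Hk.
  apply (open_part_sub_closed_part_dyadic m j); auto.
  apply Nat.lt_le_incl, INR_lt. rewrite !mult_INR, !INR_pow2.
  unfold dyadic in Hlt. assert (Pm := pow2_pos m); assert (Pn := pow2_pos n).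
  apply (Rmult_lt_compat_r (2 ^ m * 2 ^ n)) in Hlt; [|apply Rmult_lt_0_compat; auto].
  replace (INR j / 2 ^ m * (2 ^ m * 2 ^ n)) with (INR j * 2 ^ n) in Hlt by (field; lra).
  replace (INR k / 2 ^ n * (2 ^ m * 2 ^ n)) with (INR k * 2 ^ m) in Hlt by (field; lra).
  exact Hlt.
Qed.

(* The Urysohn function at [x] is the least upper bound of the dyadics [k / 2^n]
   whose closed part misses [x]. *)
Lemma urysohn_value (x : X) :
  exists r, 0 <= r /\ (forall n k, open_part n k x -> r <= dyadic n k) /\
            (forall n k, ~ closed_part n k x -> dyadic n k <= r).
Proof.
  set (S := fun r => r = 0 \/ exists n k, ~ closed_part n k x /\ r = dyadic n k).
  assert (Hub : forall n k, open_part n k x -> is_upper_bound S (dyadic n k)).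
  { intros n k Hk r [-> | [n' [k' [Hk' ->]]]].
    - apply dyadic_nonneg.
    - apply (dyadic_le_of_open_part n k n' k' x); auto. }
  assert (H2 : open_part 0 2 x) by exact I.
  destruct (completeness S (ex_intro _ _ (Hub _ _ H2)) (ex_intro _ 0 (or_introl eq_refl)))
    as [r [Hr1 Hr2]].
  exists r; repeat split.
  - apply Hr1; left; reflexivity.
  - intros n k Hk; apply Hr2, Hub, Hk.
  - intros n k Hk; apply Hr1; right; exists n, k; auto.
Qed.

Lemma urysohn_value_continuous (ur : X -> R) :
  (forall x, 0 <= ur x /\ (forall n k, open_part n k x -> ur x <= dyadic n k) /\
             (forall n k, ~ closed_part n k x -> dyadic n k <= ur x)) ->
  forall x eps, 0 < eps ->
    exists N, is_open T N /\ N x /\ forall y, N y -> Rabs (ur y - ur x) < eps.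
Proof.
  intros Hur x eps Heps.
  destruct (dyadic_small eps Heps) as [n Hn].
  destruct (exists_least_nat (fun k => open_part n k x)) as [k0 [Hk0 Hmin]].
  { exists (S (2 ^ n)).
    apply (closed_part_sub n (scale_spec_all n)), (closed_part_top n (scale_spec_all n)); lia. }
  assert (Pn := pow2_pos n).
  assert (Hband : exists a N, is_open T N /\ N x /\ (forall y, N y -> a <= ur y) /\
                             dyadic n k0 - a <= 2 / 2 ^ n).
  { destruct (Compare_dec.le_lt_dec 2 k0) as [Hk | Hk].
    - exists (dyadic n (k0 - 2)), (fun y => ~ closed_part n (k0 - 2) y).
      repeat split.
      + apply (closed_part_closed n (scale_spec_all n)).
      + intro Hx. apply (Hmin (S (k0 - 2))); [lia|].
        apply (closed_part_sub n (scale_spec_all n)), Hx.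
      + intros y Hy; apply (Hur y), Hy.
      + unfold dyadic; rewrite minus_INR by lia.
        replace (INR 2) with 2 by (simpl; lra). right; field; lra.
    - exists 0, (fun _ => True); repeat split; [apply open_full | intros y _; apply (Hur y) |].
      unfold dyadic, Rdiv; rewrite Rminus_0_r.
      apply Rmult_le_compat_r; [left; apply Rinv_0_lt_compat; auto|].
      replace 2 with (INR 2) by (simpl; lra). apply le_INR; lia. }
  destruct Hband as [a [N [HN [Nx [Ha Hk0a]]]]].
  exists (fun y => N y /\ open_part n k0 y); repeat split; auto.
  - apply open_inter; [exact HN | apply (open_part_open n (scale_spec_all n))].
  - intros y [Ny Hy].
    assert (ur y <= dyadic n k0) by (apply (Hur y), Hy).
    assert (ur x <= dyadic n k0) by (apply (Hur x), Hk0).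
    assert (a <= ur y) by (apply Ha, Ny).
    assert (a <= ur x) by (apply Ha, Nx).
    apply Rabs_def1; lra.
Qed.

Theorem urysohn : exists u : X -> unit_interval, continuous T I_top u /\
  (forall x, A x -> proj1_sig (u x) = 0) /\ (forall x, B x -> proj1_sig (u x) = 1).
Proof.
  destruct (choice _ urysohn_value) as [ur Hur].
  assert (Hle1 : forall x, ur x <= 1).
  { intro x. apply le_of_le_plus_inv_pow2; intro n.
    assert (Hx : open_part n (S (2 ^ n)) x).
    { apply (closed_part_sub n (scale_spec_all n)), (closed_part_top n (scale_spec_all n)); lia. }
    apply (Hur x) in Hx. unfold dyadic in Hx. rewrite S_INR, INR_pow2 in Hx.
    assert (Pn := pow2_pos n).
    replace ((2 ^ n + 1) / 2 ^ n) with (1 + / 2 ^ n) in Hx by (field; lra). exact Hx. }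
  assert (Hbound : forall x, 0 <= ur x <= 1) by (intro x; split; [apply Hur | apply Hle1]).
  exists (fun x => exist (fun t => 0 <= t <= 1) (ur x) (Hbound x)); repeat split.
  - intros V [U [HU HUV]].
    apply open_ext with (fun x => U (ur x)).
    { intro x; rewrite (HUV (exist _ (ur x) (Hbound x))); reflexivity. }
    apply open_of_local. intros x Ux. destruct (HU (ur x) Ux) as [e [He Hball]].
    destruct (urysohn_value_continuous ur Hur x e He) as [N [HN [Nx HNy]]].
    exists N; repeat split; auto.
  - intros x Ax; simpl. apply Rle_antisym; [|apply Hur].
    assert (H := proj1 (proj2 (Hur x)) 0%nat 0%nat (A_sub_open_part 0 (scale_spec_all 0) x Ax)).
    unfold dyadic in H; simpl in H. lra.
  - intros x Bx; simpl. apply Rle_antisym; [apply Hle1|].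
    apply le_of_le_plus_inv_pow2; intro n.
    assert (Hp : (1 <= 2 ^ n)%nat) by (apply Nat.neq_0_lt_0, Nat.pow_nonzero; lia).
    assert (Hx : ~ closed_part n (2 ^ n - 1) x).
    { intro Hc. apply (open_part_disjoint_B n (scale_spec_all n) (2 ^ n) x (le_n _)); auto.
      replace (2 ^ n)%nat with (S (2 ^ n - 1)) by lia.
      apply (closed_part_sub n (scale_spec_all n)), Hc. }
    apply (Hur x) in Hx. unfold dyadic in Hx.
    rewrite minus_INR, INR_pow2 in Hx by exact Hp. assert (Pn := pow2_pos n).
    replace ((2 ^ n - INR 1) / 2 ^ n) with (1 - / 2 ^ n) in Hx by (simpl; field; lra). lra.
Qed.

End Urysohn.

Section EquiconnectedPasting.
Context {X Y : Type} (TX : topology X) (TY : topology Y).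
Hypotheses (HX : normal TX) (HY : equiconnected TY).

Lemma equiconnected_paste (A B : X -> Prop) (phi psi : X -> Y) :
  closed TX A -> closed TX B -> (forall x, ~ (A x /\ B x)) ->
  continuous TX TY phi -> continuous TX TY psi ->
  exists h, continuous TX TY h /\
    (forall x, A x -> h x = phi x) /\ (forall x, B x -> h x = psi x).
Proof.
  intros HA HB HAB Hphi Hpsi.
  destruct HY as [g [Hg Hgp]].
  destruct (urysohn TX HX A B HA HB HAB) as [u [Hu [HuA HuB]]].
  exists (fun x => g (phi x, psi x, u x)); repeat split.
  - apply (continuous_comp TX (prod_top (prod_top TY TY) I_top) TY (fun x => (phi x, psi x, u x)) g);
      auto.
    apply continuous_pair; [apply continuous_pair|]; auto.
  - intros x Ax; apply Hgp, HuA, Ax.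
  - intros x Bx; apply Hgp, HuB, Bx.
Qed.

Lemma equiconnected_paste_finite (M : nat -> X -> Prop) (h : nat -> X -> Y) :
  (forall i, closed TX (M i)) -> (forall i j x, i <> j -> M i x -> M j x -> False) ->
  (forall i, continuous TX TY (h i)) ->
  forall m, exists G, continuous TX TY G /\
    forall i x, (i <= m)%nat -> M i x -> G x = h i x.
Proof.
  intros HM Hdisj Hh m. induction m as [|m [G [HG HGh]]].
  - exists (h 0%nat); split; auto. intros i x Hi _. replace i with 0%nat by lia; reflexivity.
  - destruct (equiconnected_paste (fun x => exists j, (j < S m)%nat /\ M j x) (M (S m)) G (h (S m)))
      as [G' [HG' [HGold HGnew]]]; auto.
    + apply closed_bounded_exists; auto.
    + intros x [[j [Hj Mj]] Ms]. apply (Hdisj j (S m) x); auto; lia.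
    + exists G'; split; auto. intros i x Hi Mi.
      destruct (Nat.eq_dec i (S m)) as [-> | Hne]; auto.
      rewrite HGold by (exists i; split; [lia | auto]). apply HGh; auto; lia.
Qed.

End EquiconnectedPasting.

(* The points whose first piece is [Q i] form the increasing union over [k] of the closed
   sets [M k i], because the union of the earlier pieces is a G_delta; the [M k i] are
   pairwise disjoint in [i], so the approximations can be pasted on them. *)
Lemma baire_one_first_piece {X Y : Type} (TX : topology X) (TY : topology Y)
  (Q : nat -> X -> Prop) (r : nat -> X -> Y) (first : X -> nat) :
  perfectly_normal TX -> equiconnected TY ->
  (forall i, closed TX (Q i)) -> (forall i, baire_one TX TY (r i)) ->
  (forall x, Q (first x) x /\ forall l, (l < first x)%nat -> ~ Q l x) ->
  baire_one TX TY (fun x => r (first x) x).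
Proof.
  intros [HX Hperf] HY HQ Hr Hfirst.
  destruct (choice _ Hr) as [h Hh].
  assert (HW : forall i, exists W : nat -> X -> Prop, (forall j, is_open TX (W j)) /\
            forall x, (exists l, (l < i)%nat /\ Q l x) <-> forall j, W j x).
  { intro i; apply Hperf, closed_bounded_exists, HQ. }
  destruct (choice _ HW) as [W HWi].
  set (M := fun k i x => Q i x /\ exists j, (j < k)%nat /\ ~ W i j x).
  assert (HMclosed : forall k i, closed TX (M k i)).
  { intros k i; apply closed_and; [apply HQ|].
    apply closed_bounded_exists; intro j; apply closed_compl, HWi. }
  assert (HMdisj : forall k i i' x, (i < i')%nat -> M k i x -> M k i' x -> False).
  { intros k i i' x Hii' [Qi _] [_ [j [_ HWj]]].
    apply HWj, (proj1 (proj2 (HWi i') x)). exists i; auto. }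
  assert (HG : forall k, exists G, continuous TX TY G /\
                forall i x, (i <= k)%nat -> M k i x -> G x = h i k x).
  { intro k. apply (equiconnected_paste_finite TX TY HX HY (M k) (fun i => h i k)).
    - apply HMclosed.
    - intros i i' x Hne Hi Hi'. destruct (Nat.lt_total i i') as [Hlt | [Heq | Hgt]].
      + exact (HMdisj k i i' x Hlt Hi Hi').
      + contradiction.
      + exact (HMdisj k i' i x Hgt Hi' Hi).
    - intro i; apply Hh. }
  destruct (choice _ HG) as [G HGk].
  exists G; split; [intro k; apply HGk|].
  intro x. destruct (Hfirst x) as [Qx Hmin].
  assert (Hj0 : exists j0, ~ W (first x) j0 x).
  { apply not_all_ex_not; intro Hall.
    destruct (proj2 (proj2 (HWi (first x)) x) Hall) as [l [Hl Ql]]. exact (Hmin l Hl Ql). }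
  destruct Hj0 as [j0 Hj0].
  apply seq_converges_eventually_eq with (fun k => h (first x) k x); [|apply Hh].
  exists (Nat.max (first x) (S j0)); intros k Hk.
  apply HGk; [lia|]. split; [exact Qx | exists j0; split; [lia | exact Hj0]].
Qed.

Lemma F_sigma_subspace_trace {X : Type} (TX : topology X) (E P : X -> Prop) :
  F_sigma (subspace TX E) (fun e : {x | E x} => P (proj1_sig e)) ->
  exists F : nat -> X -> Prop, (forall k, closed TX (F k)) /\
    forall x, E x -> (P x <-> exists k, F k x).
Proof.
  intros [F [HF HPF]].
  destruct (choice _ HF) as [U HU].
  exists (fun k x => ~ U k x); split; [intro k; apply closed_compl, HU|].
  intros x Ex. rewrite (HPF (exist _ x Ex)). split; intros [k Hk]; exists k.
  - rewrite <- (proj2 (HU k) (exist _ x Ex)); auto.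
  - apply NNPP; intro nF; apply Hk, (proj2 (HU k) (exist _ x Ex)), nF.
Qed.

(* Cantor pairing merges the closed sets outside [E] (label irrelevant) with, for each [n],
   the closed sets whose traces exhaust [En n] (label [n]). *)
Lemma labelled_closed_cover {X : Type} (TX : topology X) (E : X -> Prop) (En : nat -> X -> Prop) :
  (forall x, E x <-> exists n, En n x) ->
  (forall n, F_sigma (subspace TX E) (fun e : {x | E x} => En n (proj1_sig e))) ->
  G_delta TX E ->
  exists (Q : nat -> X -> Prop) (label : nat -> nat),
    (forall i, closed TX (Q i)) /\ (forall x, exists i, Q i x) /\
    (forall i x, Q i x -> E x -> En (label i) x).
Proof.
  intros HE HEn [Gd [HGd HEGd]].
  destruct (choice _ (fun n => F_sigma_subspace_trace TX E (En n) (HEn n))) as [F HF].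
  set (Qp := fun p : nat * nat => match fst p with
                                  | O => fun x => ~ Gd (snd p) x
                                  | S n => F n (snd p)
                                  end).
  exists (fun i => Qp (Cantor.of_nat i)), (fun i => Nat.pred (fst (Cantor.of_nat i))).
  repeat split.
  - intro i; unfold Qp; destruct (Cantor.of_nat i) as [[|n] k]; simpl.
    + apply closed_compl, HGd.
    + apply HF.
  - intro x. destruct (classic (E x)) as [Ex | nEx].
    + destruct (proj1 (HE x) Ex) as [n Hn].
      destruct (proj1 (proj2 (HF n) x Ex) Hn) as [k Hk].
      exists (Cantor.to_nat (S n, k)). rewrite Cantor.cancel_of_to. exact Hk.
    + destruct (not_all_ex_not _ _ (fun H => nEx (proj2 (HEGd x) H))) as [k Hk].
      exists (Cantor.to_nat (0%nat, k)). rewrite Cantor.cancel_of_to. exact Hk.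
  - intros i x. unfold Qp; destruct (Cantor.of_nat i) as [[|n] k]; simpl; intros Hx Ex.
    + contradiction (Hx (proj1 (HEGd x) Ex k)).
    + apply (proj2 (HF n) x Ex); exists k; exact Hx.
Qed.

Lemma B1_retract_into_superset {X : Type} (TX : topology X) (A E : X -> Prop) :
  (forall x, A x -> E x) -> B1_retract TX A ->
  exists r : X -> {x | E x}, baire_one TX (subspace TX E) r /\
    forall x, A x -> proj1_sig (r x) = x.
Proof.
  intros HAE [r [Hr Hfix]].
  exists (fun x => subspace_incl A E HAE (r x)); split.
  - apply (baire_one_comp_continuous TX (subspace TX A)); auto.
    apply subspace_incl_continuous.
  - intros x Ax. unfold subspace_incl; simpl.
    replace (r x) with (exist A x Ax) by (symmetry; exact (Hfix (exist A x Ax))).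
    reflexivity.
Qed.

Theorem theorem2p6 (X : Type) (TX : topology X) (E : X -> Prop)
  (En : nat -> X -> Prop) :
  perfectly_normal TX ->
  equiconnected (subspace TX E) ->
  (forall x, E x <-> exists n, En n x) ->
  (forall n m, n <> m -> forall x, ~ (En n x /\ En m x)) ->
  (forall n, ambiguous (subspace TX E) (fun e : {x | E x} => En n (proj1_sig e))) ->
  (forall n, B1_retract TX (En n)) ->
  G_delta TX E ->
  B1_retract TX E.
Proof.
  intros HX HEq HE _ Hamb HB1 HGd.
  destruct (labelled_closed_cover TX E En HE (fun n => proj1 (Hamb n)) HGd)
    as [Q [label [HQ [Hcover HQE]]]].
  assert (HEnE : forall n x, En n x -> E x) by (intros n x Hx; apply HE; exists n; exact Hx).
  destruct (choice _ (fun n => B1_retract_into_superset TX (En n) E (HEnE n) (HB1 n)))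
    as [r Hr].
  destruct (choice _ (fun x => exists_least_nat (fun i => Q i x) (Hcover x))) as [first Hfirst].
  exists (fun x => r (label (first x)) x); split.
  - apply (baire_one_first_piece TX (subspace TX E) Q (fun i => r (label i)) first); auto.
    intro i; apply Hr.
  - intros [x Ex]. apply eq_sig_hprop; [intros; apply proof_irrelevance|]; simpl.
    apply Hr, HQE; [apply Hfirst | exact Ex].
Qed.
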